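(* Let $\mathscr H$ be a complex Hilbert space and $\mathbf{X},\mathbf{Y}\in\mathbb{B}(\mathscr H)^d$. Then $$\max\{w_e(\mathbf{X}),w_e(\mathbf{Y})\}\le w_e\left(\begin{bmatrix}\mathbf{X}&\mathbf{Y}\\-\mathbf{Y}&-\mathbf{X}\end{bmatrix}\right)\le w_e(\mathbf{X})+w_e(\mathbf{Y}).$$
   Context: $\mathbb{B}(\mathscr H)$ denotes the bounded linear operators on $\mathscr H$. $w_e(\mathbf{T})=\sup\{(\sum_{k}|\langle T_kx,x\rangle|^2)^{1/2}: \|x\|=1\}$ for $\mathbf{T}=(T_1,\dots,T_d)$; $-\mathbf{X}=(-X_1,\dots,-X_d)$. For $d$-tuples, $\begin{bmatrix}\mathbf{X}&\mathbf{Y}\\\mathbf{Z}&\mathbf{W}\end{bmatrix}$ denotes the $d$-tuple $\left(\begin{bmatrix}X_k&Y_k\\Z_k&W_k\end{bmatrix}\right)_{k=1}^d$ of operators on $\mathscr H\oplus\mathscr H$. *)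

From HB Require Import structures.
From mathcomp Require Import all_boot all_order all_algebra.
From mathcomp Require Import classical_sets reals.
From mathcomp Require Import complex.
Set Implicit Arguments. Unset Strict Implicit. Unset Printing Implicit Defensive.
Import Order.TTheory GRing.Theory Num.Theory.
Local Open Scope ring_scope.

Section Hilbert.
Variable R : realType.
Local Notation C := R[i].

Definition cconj (z : C) : C := complex.Complex (complex.Re z) (- complex.Im z).

Definition cabs2 (z : C) : R := complex.Re z ^+ 2 + complex.Im z ^+ 2.

Definition is_inner_product (V : lmodType C) (ip : V -> V -> C) : Prop :=
  [/\ (forall (a : C) (x y z : V), ip (a *: x + y) z = a * ip x z + ip y z),
      (forall x y : V, ip y x = cconj (ip x y)),
      (forall x : V, complex.Im (ip x x) = 0 /\ 0 <= complex.Re (ip x x))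
    & (forall x : V, ip x x = 0 -> x = 0)].

Definition ipnorm (V : Type) (ip : V -> V -> C) (x : V) : R :=
  Num.sqrt (complex.Re (ip x x)).

Definition ip_complete (V : lmodType C) (ip : V -> V -> C) : Prop :=
  forall u : nat -> V,
    (forall e : R, 0 < e -> exists N : nat, forall m n : nat,
        (N <= m)%N -> (N <= n)%N -> ipnorm ip (u m - u n) < e) ->
    exists l : V, forall e : R, 0 < e -> exists N : nat, forall n : nat,
        (N <= n)%N -> ipnorm ip (u n - l) < e.

Definition is_hilbert (V : lmodType C) (ip : V -> V -> C) : Prop :=
  is_inner_product ip /\ ip_complete ip.

Definition bounded_op (V : lmodType C) (ip : V -> V -> C) (T : V -> V) : Prop :=
  (forall (a : C) (x y : V), T (a *: x + y) = a *: T x + T y) /\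
  (exists M : R, forall x : V, ipnorm ip (T x) <= M * ipnorm ip x).

Definition euclid_radius (V : Type) (ip : V -> V -> C) (d : nat)
    (T : 'I_d -> V -> V) : R :=
  sup [set r : R | exists x : V, ipnorm ip x = 1 /\
        r = Num.sqrt (\sum_(k < d) cabs2 (ip (T k x) x))]%classic.

Definition ip_sum (V : Type) (ip : V -> V -> C) (p q : V * V) : C :=
  ip p.1 q.1 + ip p.2 q.2.

Definition block_op (V : lmodType C) (A B D E : V -> V) (p : V * V) : V * V :=
  (A p.1 + B p.2, D p.1 + E p.2).

Definition block_tuple (V : lmodType C) (d : nat) (X Y Z W : 'I_d -> V -> V)
    : 'I_d -> V * V -> V * V :=
  fun k => block_op (X k) (Y k) (Z k) (W k).

Definition neg_tuple (V : lmodType C) (d : nat) (X : 'I_d -> V -> V)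
    : 'I_d -> V -> V :=
  fun k x => - X k x.

End Hilbert.

(* Write q_T(x) = (<T_k x, x>)_k in C^d, so that w_e(T) is the supremum of the
   Euclidean norm |q_T(x)| over unit vectors x.
   For p = (u, v) the polarization-type identity
     q_M(p) = q_X(u) - q_X(v) + (i/2) (q_Y(v + iu) - q_Y(v - iu))
   and the parallelogram law ||v + iu||^2 + ||v - iu||^2 = 2 (||u||^2 + ||v||^2)
   give the upper bound.  The lower bound comes from the unit vectors (x, 0)
   and (x, ix)/sqrt 2, for which q_M equals q_X(x) and i q_Y(x). *)

From HB Require Import structures.
From mathcomp Require Import all_boot all_order all_algebra.
From mathcomp Require Import boolp classical_sets reals.
From mathcomp Require Import complex.
From mathcomp Require Import ring lra.
Import Order.TTheory GRing.Theory Num.Theory.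
Set Implicit Arguments. Unset Strict Implicit.
Local Open Scope ring_scope.
Local Open Scope classical_set_scope.

Section ComplexFacts.
Variable R : realType.
Implicit Types a b : R[i].

Lemma cconjD a b : cconj (a + b) = cconj a + cconj b.
Proof. by case: a => a1 a2; case: b => b1 b2; congr complex.Complex => /=; ring. Qed.

Lemma cconjM a b : cconj (a * b) = cconj a * cconj b.
Proof. by case: a => a1 a2; case: b => b1 b2; congr complex.Complex => /=; ring. Qed.

Lemma cconj_real (t : R) : cconj (t%:C)%C = (t%:C)%C.
Proof. by congr complex.Complex => /=; rewrite oppr0. Qed.

Lemma ReD a b : complex.Re (a + b) = complex.Re a + complex.Re b.
Proof. by case: a => ? ?; case: b => ? ?. Qed.

Lemma ReC_real (t : R) a : complex.Re ((t%:C)%C * a) = t * complex.Re a.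
Proof. by case: a => ? ? /=; ring. Qed.

Lemma cabs2M a b : cabs2 (a * b) = cabs2 a * cabs2 b.
Proof. by case: a => a1 a2; case: b => b1 b2; rewrite /cabs2 /=; ring. Qed.

Lemma cabs2N a : cabs2 (- a) = cabs2 a.
Proof. by case: a => a1 a2; rewrite /cabs2 /= !sqrrN. Qed.

Lemma cabs2_ge0 a : 0 <= cabs2 a.
Proof. by rewrite /cabs2 addr_ge0 ?sqr_ge0. Qed.

Lemma cabs2_eq0 a : cabs2 a = 0 -> a = 0.
Proof.
case: a => a1 a2; rewrite /cabs2 /= => h.
have := sqr_ge0 a1; have := sqr_ge0 a2 => h2 h1.
have /eqP : a1 ^+ 2 = 0 by lra.
have /eqP : a2 ^+ 2 = 0 by lra.
by rewrite !sqrf_eq0 => /eqP -> /eqP ->.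
Qed.

End ComplexFacts.

Definition Nrm (R : realType) (d : nat) (f : 'I_d -> R[i]) : R :=
  Num.sqrt (\sum_(k < d) cabs2 (f k)).

Section EuclideanNorm.
Variables (R : realType) (d : nat).
Implicit Types f g : 'I_d -> R[i].

Lemma Nrm_ge0 f : 0 <= Nrm f.
Proof. exact: sqrtr_ge0. Qed.

Lemma Nrm_ext f g : (forall k, f k = g k) -> Nrm f = Nrm g.
Proof. by move=> fg; rewrite /Nrm; congr Num.sqrt; apply: eq_bigr => k _; rewrite fg. Qed.

Lemma Nrm_scale (c : R[i]) f : Nrm (fun k => c * f k) = Num.sqrt (cabs2 c) * Nrm f.
Proof.
rewrite /Nrm -sqrtrM ?cabs2_ge0 // mulr_sumr; congr Num.sqrt.
by apply: eq_bigr => k _; rewrite cabs2M.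
Qed.

Definition rdot f g : R :=
  \sum_(k < d) (complex.Re (f k) * complex.Re (g k) + complex.Im (f k) * complex.Im (g k)).

(* Cauchy-Schwarz, from B (A B - D^2) = sum_k |B f_k - D g_k|^2 >= 0. *)
Lemma rdot_CS f g :
  rdot f g ^+ 2 <= (\sum_(k < d) cabs2 (f k)) * (\sum_(k < d) cabs2 (g k)).
Proof.
set D := rdot f g; set A := \sum_(k < d) _; set B := \sum_(k < d) _.
have sos : B * (A * B - D ^+ 2) = \sum_(k < d)
    ((B * complex.Re (f k) - D * complex.Re (g k)) ^+ 2 +
     (B * complex.Im (f k) - D * complex.Im (g k)) ^+ 2).
  rewrite (eq_bigr (fun k => B ^+ 2 * cabs2 (f k) - 2 * B * D *
     (complex.Re (f k) * complex.Re (g k) + complex.Im (f k) * complex.Im (g k))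
     + D ^+ 2 * cabs2 (g k))); last by move=> k _; rewrite /cabs2; ring.
  by rewrite !big_split /= sumrN -!mulr_sumr -/(rdot f g) -/A -/B -/D; ring.
have B0 : 0 <= B by apply: sumr_ge0 => k _; exact: cabs2_ge0.
case: (ltrP 0 B) => [Bpos|Ble0].
  have : 0 <= B * (A * B - D ^+ 2).
    by rewrite sos; apply: sumr_ge0 => k _; rewrite addr_ge0 ?sqr_ge0.
  by rewrite pmulr_rge0 // subr_ge0.
have B00 : B = 0 by apply/eqP; rewrite eq_le Ble0 B0.
have g0 k : g k = 0.
  by apply: cabs2_eq0; move/psumr_eq0P: B00; apply=> // j _; exact: cabs2_ge0.
have -> : D = 0 by apply: big1 => k _; rewrite g0 /=; ring.
by rewrite B00 expr0n mulr0.
Qed.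

Lemma Nrm_triangle f g : Nrm (fun k => f k + g k) <= Nrm f + Nrm g.
Proof.
set A := \sum_(k < d) cabs2 (f k); set B := \sum_(k < d) cabs2 (g k).
have A0 : 0 <= A by apply: sumr_ge0 => k _; exact: cabs2_ge0.
have B0 : 0 <= B by apply: sumr_ge0 => k _; exact: cabs2_ge0.
have expand : \sum_(k < d) cabs2 (f k + g k) = A + B + 2 * rdot f g.
  rewrite (eq_bigr (fun k => cabs2 (f k) + cabs2 (g k) + 2 *
     (complex.Re (f k) * complex.Re (g k) + complex.Im (f k) * complex.Im (g k)))).
    by rewrite big_split /= big_split /= -mulr_sumr.
  by move=> k _; case: (f k) => a b; case: (g k) => c e; rewrite /cabs2 /=; ring.
have dot_le : rdot f g <= Nrm f * Nrm g.
  rewrite /Nrm -sqrtrM // (le_trans (real_ler_norm _)) ?num_real //.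
  by rewrite -sqrtr_sqr ler_wsqrtr // rdot_CS.
have nA : Nrm f ^+ 2 = A by rewrite /Nrm sqr_sqrtr.
have nB : Nrm g ^+ 2 = B by rewrite /Nrm sqr_sqrtr.
rewrite -[leRHS]ger0_norm ?addr_ge0 ?Nrm_ge0 // -sqrtr_sqr /Nrm expand.
by rewrite ler_wsqrtr // sqrrD -/(Nrm f) -/(Nrm g) nA nB; lra.
Qed.

Lemma Nrm_sub_le f g : Nrm (fun k => f k - g k) <= Nrm f + Nrm g.
Proof.
have -> : Nrm g = Nrm (fun k => - g k).
  by rewrite /Nrm; congr Num.sqrt; apply: eq_bigr => k _; rewrite cabs2N.
exact: Nrm_triangle.
Qed.

End EuclideanNorm.

Section InnerProduct.
Variables (R : realType) (V : lmodType R[i]) (ip : V -> V -> R[i]).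
Hypothesis hip : is_inner_product ip.

Lemma ipC x y : ip y x = cconj (ip x y).
Proof. by case: hip. Qed.

Lemma ipDl x y z : ip (x + y) z = ip x z + ip y z.
Proof. by case: hip => lin _ _ _; rewrite -[x]scale1r lin scale1r mul1r. Qed.

Lemma ip0l z : ip 0 z = 0.
Proof. by apply: (@addrI _ (ip 0 z)); rewrite -ipDl !addr0. Qed.

Lemma ipZl a x z : ip (a *: x) z = a * ip x z.
Proof. by case: hip => lin _ _ _; rewrite -[a *: x]addr0 lin ip0l addr0. Qed.

Lemma ipNl x z : ip (- x) z = - ip x z.
Proof. by rewrite -scaleN1r ipZl mulN1r. Qed.

Lemma ipDr x y z : ip z (x + y) = ip z x + ip z y.
Proof. by rewrite ipC ipDl cconjD -!ipC. Qed.

Lemma ipZr a x z : ip z (a *: x) = cconj a * ip z x.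
Proof. by rewrite ipC ipZl cconjM -!ipC. Qed.

Lemma ip0r z : ip z 0 = 0.
Proof. by rewrite -(scale0r 0) ipZr /cconj /= oppr0 mul0r. Qed.

Lemma ipIm x : complex.Im (ip x x) = 0.
Proof. by case: hip => _ _ h _; case: (h x). Qed.

Lemma ipRe x : 0 <= complex.Re (ip x x).
Proof. by case: hip => _ _ h _; case: (h x). Qed.

Lemma ipRe_eq0 x : complex.Re (ip x x) = 0 -> x = 0.
Proof.
case: hip => _ _ _ definite Re0; apply: definite.
by move: (ipIm x) Re0; case: (ip x x) => a b /= -> ->.
Qed.

Lemma ipnorm_eq1 x : ipnorm ip x = 1 -> complex.Re (ip x x) = 1.
Proof. by move=> nx; rewrite -(sqr_sqrtr (ipRe x)) -/(ipnorm ip x) nx expr1n. Qed.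

Lemma ipZZ_real (t : R) x :
  ip ((t%:C)%C *: x) ((t%:C)%C *: x) = ((t * t)%:C)%C * ip x x.
Proof.
rewrite ipZl ipZr cconj_real mulrA; congr (_ * _).
by congr complex.Complex => /=; ring.
Qed.

Lemma parallelogram_i u v :
  complex.Re (ip (v + 'i%C *: u) (v + 'i%C *: u)) +
  complex.Re (ip (v + (- 'i%C) *: u) (v + (- 'i%C) *: u)) =
  2 * (complex.Re (ip u u) + complex.Re (ip v v)).
Proof.
rewrite !(ipDl, ipDr, ipZl, ipZr).
by move: (ip u u) (ip v v) (ip u v) (ip v u) => [? ?] [? ?] [? ?] [? ?] /=; ring.
Qed.

(* 2 Re (conj c <z, x>) <= ||z||^2 + ||x||^2 for |c| = 1, from ||z - c x||^2 >= 0. *)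
Lemma ip_phase_le c z x : cabs2 c = 1 ->
  2 * complex.Re (cconj c * ip z x) <= complex.Re (ip z z) + complex.Re (ip x x).
Proof.
move=> c1; have := ipRe (z + (- c) *: x).
rewrite !(ipDl, ipDr, ipZl, ipZr) (ipC z x).
move: c1 (ipIm z) (ipIm x); rewrite /cabs2.
case: (ip z z) => zz1 zz2; case: (ip x x) => xx1 xx2; case: (ip z x) => w1 w2.
case: c => c1 c2 /= c1n zz0 xx0; subst.
have -> : - c1 * (- c1 * xx1 - - - c2 * 0) - - c2 * (- c1 * 0 + - - c2 * xx1)
          = (c1 ^+ 2 + c2 ^+ 2) * xx1 by ring.
by rewrite c1n mul1r; lra.
Qed.

(* A crude Cauchy-Schwarz: |<z, x>|^2 <= 2 ((||z||^2 + ||x||^2) / 2)^2,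
   from the four phases c = 1, -1, i, -i. *)
Lemma cabs2_ip_le z x :
  cabs2 (ip z x) <= 2 * ((complex.Re (ip z z) + complex.Re (ip x x)) / 2) ^+ 2.
Proof.
have c1 : cabs2 (1 : R[i]) = 1 by rewrite /cabs2 /=; ring.
have ci : cabs2 ('i : R[i]) = 1 by rewrite /cabs2 /=; ring.
have cm1 : cabs2 (- 1 : R[i]) = 1 by rewrite cabs2N.
have cmi : cabs2 (- 'i : R[i]) = 1 by rewrite cabs2N.
move: (ip_phase_le z x c1) (ip_phase_le z x cm1) (ip_phase_le z x ci) (ip_phase_le z x cmi).
rewrite /cabs2; set P := complex.Re (ip z z) + complex.Re (ip x x).
case: (ip z x) => w1 w2 /= h1 h2 h3 h4.
have e1 : w1 ^+ 2 <= (P / 2) ^+ 2 by nra.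
have e2 : w2 ^+ 2 <= (P / 2) ^+ 2 by nra.
lra.
Qed.

End InnerProduct.

Section BoundedOperator.
Variables (R : realType) (V : lmodType R[i]) (ip : V -> V -> R[i]) (T : V -> V).
Hypothesis hT : bounded_op ip T.

Lemma opD x y : T (x + y) = T x + T y.
Proof. by case: hT => lin _; rewrite -[x]scale1r lin !scale1r. Qed.

Lemma op0 : T 0 = 0.
Proof. by apply: (@addrI _ (T 0)); rewrite -opD !addr0. Qed.

Lemma opZ a x : T (a *: x) = a *: T x.
Proof. by case: hT => lin _; rewrite -[a *: x]addr0 lin op0 addr0. Qed.

End BoundedOperator.

Definition qv (R : realType) (V : Type) (ip : V -> V -> R[i]) (d : nat)
    (T : 'I_d -> V -> V) (x : V) : 'I_d -> R[i] := fun k => ip (T k x) x.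

Definition radius_set (R : realType) (V : Type) (ip : V -> V -> R[i]) (d : nat)
    (T : 'I_d -> V -> V) : set R :=
  [set r : R | exists x : V, ipnorm ip x = 1 /\ r = Nrm (qv ip T x)].

Section RadiusSup.
Variables (R : realType) (V : Type) (ip : V -> V -> R[i]) (d : nat).
Implicit Types T : 'I_d -> V -> V.

Lemma radius_ge0 T : 0 <= euclid_radius ip T.
Proof.
rewrite /euclid_radius; set S := [set _ | _].
have [supS|/sup_out->//] := pselect (has_sup S).
case: (supS) => [[r Sr] _]; apply: le_trans (sup_upper_bound supS Sr).
by case: Sr => x [_ ->]; exact: sqrtr_ge0.
Qed.

Lemma radius_ub T : has_ubound (radius_set ip T) ->
  forall x, ipnorm ip x = 1 -> Nrm (qv ip T x) <= euclid_radius ip T.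
Proof. by move=> bounded x nx; apply: (ub_le_sup bounded); exists x. Qed.

Lemma radius_le T (b : R) : 0 <= b ->
  (forall x, ipnorm ip x = 1 -> Nrm (qv ip T x) <= b) -> euclid_radius ip T <= b.
Proof.
move=> b0 hb; rewrite /euclid_radius; set S := [set _ | _].
have [supS|/sup_out->//] := pselect (has_sup S).
by apply: ge_sup; [case: supS | move=> r [x [nx ->]]; exact: hb].
Qed.

End RadiusSup.

Lemma radius_le_of_realized (R : realType) (V W : Type) (ipV : V -> V -> R[i])
    (ipW : W -> W -> R[i]) (d : nat) (T : 'I_d -> V -> V) (S : 'I_d -> W -> W) :
  has_ubound (radius_set ipW S) ->
  (forall x, ipnorm ipV x = 1 ->
     exists2 p, ipnorm ipW p = 1 & Nrm (qv ipW S p) = Nrm (qv ipV T x)) ->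
  euclid_radius ipV T <= euclid_radius ipW S.
Proof.
move=> bounded realized; apply: radius_le; first exact: radius_ge0.
by move=> x /realized [p np <-]; exact: radius_ub.
Qed.

Section RadiusBound.
Variables (R : realType) (V : lmodType R[i]) (ip : V -> V -> R[i]) (d : nat).
Variable T : 'I_d -> V -> V.
Hypothesis hip : is_inner_product ip.
Hypothesis hT : forall k, bounded_op ip (T k).

Lemma radius_set_bounded : has_ubound (radius_set ip T).
Proof.
have /choice [Mk hM] : forall k, exists M : R, forall x, ipnorm ip (T k x) <= M * ipnorm ip x.
  by move=> k; case: (hT k).
exists (Num.sqrt (\sum_(k < d) 2 * ((Mk k ^+ 2 + 1) / 2) ^+ 2)) => _ [x [nx ->]].
apply: ler_wsqrtr; apply: ler_sum => k _.
apply: le_trans (cabs2_ip_le hip _ _) _.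
rewrite (ipnorm_eq1 hip nx).
have TxM : complex.Re (ip (T k x) (T k x)) <= Mk k ^+ 2.
  have := hM k x; rewrite nx mulr1 -(sqr_sqrtr (ipRe hip (T k x))).
  by have := sqrtr_ge0 (complex.Re (ip (T k x) (T k x))); rewrite /ipnorm; nra.
by have := ipRe hip (T k x); nra.
Qed.

Lemma qv_scale_real (t : R) z k :
  qv ip T ((t%:C)%C *: z) k = ((t * t)%:C)%C * qv ip T z k.
Proof.
rewrite /qv (opZ (hT k)) (ipZl hip) (ipZr hip) cconj_real mulrA; congr (_ * _).
by congr complex.Complex => /=; ring.
Qed.

Lemma Nrm_qv_le z : Nrm (qv ip T z) <= complex.Re (ip z z) * euclid_radius ip T.
Proof.
set r := complex.Re (ip z z).
have [rpos|rle0] := ltrP 0 r; last first.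
  have r0 : r = 0 by apply/eqP; rewrite eq_le rle0 ipRe.
  rewrite r0 mul0r /Nrm big1 ?sqrtr0 // => k _.
  by rewrite /qv (ipRe_eq0 hip r0) (op0 (hT k)) (ip0l hip) /cabs2 /= expr0n addr0.
set t := (Num.sqrt r)^-1.
have tt : t * t = r^-1.
  by rewrite -invfM -expr2 sqr_sqrtr // ltW.
have unit : ipnorm ip ((t%:C)%C *: z) = 1.
  rewrite /ipnorm (ipZZ_real hip) ReC_real -/r tt mulVf ?sqrtr1 //.
  exact: lt0r_neq0.
have := radius_ub radius_set_bounded unit.
rewrite (Nrm_ext (qv_scale_real t z)) Nrm_scale.
have -> : cabs2 ((t * t)%:C)%C = (t * t) ^+ 2 by rewrite /cabs2 /=; ring.
rewrite sqrtr_sqr ger0_norm tt; first by rewrite ler_pdivrMl.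
by rewrite invr_ge0 ltW.
Qed.

End RadiusBound.

Section BlockTuple.
Variables (R : realType) (V : lmodType R[i]) (ip : V -> V -> R[i]) (d : nat).
Variables X Y : 'I_d -> V -> V.
Hypothesis hip : is_inner_product ip.
Hypothesis hX : forall k, bounded_op ip (X k).
Hypothesis hY : forall k, bounded_op ip (Y k).

Let M := block_tuple X Y (neg_tuple Y) (neg_tuple X).

Lemma qv_block_polarization u v k :
  qv (ip_sum ip) M (u, v) k =
  (qv ip X u k - qv ip X v k) +
  complex.Complex 0 (1 / 2) *
    (qv ip Y (v + 'i%C *: u) k - qv ip Y (v + (- 'i%C) *: u) k).
Proof.
rewrite /qv /ip_sum /M /block_tuple /block_op /neg_tuple /=.
rewrite !(opD (hY k)) !(opZ (hY k)) !(ipDl hip, ipDr hip, ipNl hip, ipZl hip, ipZr hip).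
move: (ip (X k u) u) (ip (X k v) v) (ip (Y k v) u) (ip (Y k u) v) (ip (Y k u) u) (ip (Y k v) v).
move=> [? ?] [? ?] [? ?] [? ?] [? ?] [? ?].
by congr complex.Complex => /=; lra.
Qed.

Lemma Nrm_qv_block_le p : ipnorm (ip_sum ip) p = 1 ->
  Nrm (qv (ip_sum ip) M p) <= euclid_radius ip X + euclid_radius ip Y.
Proof.
case: p => u v np.
have unit : complex.Re (ip u u) + complex.Re (ip v v) = 1.
  have := sqr_sqrtr (addr_ge0 (ipRe hip u) (ipRe hip v)).
  by rewrite -ReD -/(ipnorm (ip_sum ip) (u, v)) np expr1n.
rewrite (Nrm_ext (qv_block_polarization u v)).
apply: le_trans (Nrm_triangle _ _) _; rewrite Nrm_scale.
have -> : Num.sqrt (cabs2 (complex.Complex 0 (1 / 2) : R[i])) = 1 / 2.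
  have -> : cabs2 (complex.Complex 0 (1 / 2) : R[i]) = (1 / 2) ^+ 2.
    by rewrite /cabs2 /=; ring.
  by rewrite sqrtr_sqr ger0_norm // divr_ge0.
set z1 := v + 'i%C *: u; set z2 := v + (- 'i%C) *: u.
have hXd := Nrm_sub_le (qv ip X u) (qv ip X v).
have hYd := Nrm_sub_le (qv ip Y z1) (qv ip Y z2).
have hXu := Nrm_qv_le hip hX u; have hXv := Nrm_qv_le hip hX v.
have hY1 := Nrm_qv_le hip hY z1; have hY2 := Nrm_qv_le hip hY z2.
have par := parallelogram_i hip u v; rewrite unit mulr1 -/z1 -/z2 in par.
set wX := euclid_radius ip X in hXu hXv *; set wY := euclid_radius ip Y in hY1 hY2 *.
have sumX : complex.Re (ip u u) * wX + complex.Re (ip v v) * wX = wX.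
  by rewrite -mulrDl unit mul1r.
have sumY : complex.Re (ip z1 z1) * wY + complex.Re (ip z2 z2) * wY = 2 * wY.
  by rewrite -mulrDl par.
lra.
Qed.

Lemma radius_block_set_bounded : has_ubound (radius_set (ip_sum ip) M).
Proof.
by exists (euclid_radius ip X + euclid_radius ip Y) => _ [p [np ->]]; exact: Nrm_qv_block_le.
Qed.

Lemma radius_block_le : euclid_radius (ip_sum ip) M <= euclid_radius ip X + euclid_radius ip Y.
Proof. by apply: radius_le; [rewrite addr_ge0 ?radius_ge0 | exact: Nrm_qv_block_le]. Qed.

Lemma radius_le_block_X : euclid_radius ip X <= euclid_radius (ip_sum ip) M.
Proof.
apply: radius_le_of_realized radius_block_set_bounded _ => x nx.
exists (x, 0); first by rewrite /ipnorm /ip_sum /= (ip0l hip) addr0.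
apply: Nrm_ext => k; rewrite /qv /ip_sum /M /block_tuple /block_op /neg_tuple /=.
by rewrite (op0 (hY k)) (op0 (hX k)) oppr0 !addr0 (ip0r hip) addr0.
Qed.

Lemma radius_le_block_Y : euclid_radius ip Y <= euclid_radius (ip_sum ip) M.
Proof.
apply: radius_le_of_realized radius_block_set_bounded _ => x nx.
set s := Num.sqrt (1 / 2 : R).
have ss : s ^+ 2 = 1 / 2 by rewrite sqr_sqrtr // divr_ge0.
exists ((s%:C)%C *: x, ('i%C * (s%:C)%C) *: x).
  rewrite /ipnorm /ip_sum /= !(ipZl hip) !(ipZr hip).
  move: (ipnorm_eq1 hip nx) (ipIm hip x); case: (ip x x) => w1 w2 /= -> ->.
  by rewrite -[RHS]sqrtr1; congr Num.sqrt; nra.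
have rotate k : qv (ip_sum ip) M ((s%:C)%C *: x, ('i%C * (s%:C)%C) *: x) k
    = complex.Complex 0 (2 * s ^+ 2) * qv ip Y x k.
  rewrite /qv /ip_sum /M /block_tuple /block_op /neg_tuple /=.
  rewrite !(opZ (hX k)) !(opZ (hY k)) !(ipDl hip, ipNl hip, ipZl hip, ipZr hip).
  move: (ip (X k x) x) (ip (Y k x) x) => [? ?] [? ?].
  by congr complex.Complex => /=; ring.
rewrite (Nrm_ext rotate) Nrm_scale.
have -> : cabs2 (complex.Complex 0 (2 * s ^+ 2) : R[i]) = 1 by rewrite /cabs2 /= ss; nra.
by rewrite sqrtr1 mul1r.
Qed.

End BlockTuple.

Local Close Scope classical_set_scope.
Unset Implicit Arguments.

Theorem theorem3p10 (R : realType) (V : lmodType R[i]) (ip : V -> V -> R[i])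
    (d : nat) (X Y : 'I_d -> V -> V) :
  is_hilbert ip ->
  (forall k, bounded_op ip (X k)) ->
  (forall k, bounded_op ip (Y k)) ->
  let M := block_tuple X Y (neg_tuple Y) (neg_tuple X) in
  Num.max (euclid_radius ip X) (euclid_radius ip Y) <= euclid_radius (ip_sum ip) M /\
  euclid_radius (ip_sum ip) M <= euclid_radius ip X + euclid_radius ip Y.
Proof.
move=> [hip _] hX hY M.
split; last exact: radius_block_le.
by rewrite ge_max radius_le_block_X ?radius_le_block_Y.
Qed.
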